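(* If for every $k\in\mathbb{N}$ there is a vertex $v_k\in V(G)$ lying on $k$ pairwise edge-disjoint cycles of $G$, then $G$ is $\omega$-evadible.
   Context: Cat Herding is played on a simple, possibly infinite graph $G$. The cat first places its token on a vertex. Then the players alternate, the herder moving first: the herder deletes one edge of the current graph, and then, unless the cat's current vertex has degree $0$ in the current graph, the cat moves its token along a finite path with at least one edge in the current graph to a different vertex. The cat is captured when its vertex has degree $0$ in the current graph. $G$ is $k$-evadible if the cat has a strategy (including its choice of starting vertex) that, against every herder strategy, yields a legal cat move after each of the first $k-1$ edge deletions; $G$ is $\omega$-evadible if it is $k$-evadible for every $k\in\mathbb{N}$. *)

From Stdlib Require Import List Arith.
Import ListNotations.
Set Implicit Arguments.

Section CatHerding.
Variable V : Type.

Definition consec (l : list V) (x y : V) : Prop :=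
  exists l1 l2, l = l1 ++ x :: y :: l2.

Definition is_path (E : V -> V -> Prop) (l : list V) : Prop :=
  NoDup l /\ 2 <= length l /\ (forall x y, consec l x y -> E x y).

Definition is_cycle (E : V -> V -> Prop) (c : list V) : Prop :=
  match c with
  | [] => False
  | a :: _ => NoDup c /\ 3 <= length c /\
              (forall x y, consec (c ++ [a]) x y -> E x y)
  end.

Definition cycle_edge (c : list V) (x y : V) : Prop :=
  match c with
  | [] => False
  | a :: _ => consec (c ++ [a]) x y \/ consec (c ++ [a]) y x
  end.

(* The current graph: the edges of G (relation adj) minus the deleted
   edges D (a list of ordered pairs, each representing an unordered edge). *)
Definition present (adj : V -> V -> Prop) (D : list (V * V)) (x y : V) : Prop :=
  adj x y /\ ~ In (x, y) D /\ ~ In (y, x) D.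

Definition cat_move (E : V -> V -> Prop) (v w : V) : Prop :=
  exists l, is_path E (v :: l ++ [w]).

(* CatSurvives adj n D v : the cat, sitting at v with edge set D already
   deleted, has a strategy guaranteeing a legal move after each of the next
   n herder deletions (herder deletes any edge of the current graph). *)
Fixpoint CatSurvives (adj : V -> V -> Prop) (n : nat) (D : list (V * V)) (v : V)
  : Prop :=
  match n with
  | 0 => True
  | S n' => forall x y, present adj D x y ->
      exists w, cat_move (present adj ((x, y) :: D)) v w /\
                CatSurvives adj n' ((x, y) :: D) w
  end.

Definition k_evadible (adj : V -> V -> Prop) (k : nat) : Prop :=
  exists v, CatSurvives adj (k - 1) [] v.

Definition omega_evadible (adj : V -> V -> Prop) : Prop :=
  forall k, k_evadible adj k.

Definition on_k_edge_disjoint_cycles (adj : V -> V -> Prop) (v : V) (k : nat)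
  : Prop :=
  exists cs : list (list V),
    length cs = k /\
    (forall c, In c cs -> is_cycle adj c /\ In v c) /\
    (forall i j, i < j < k -> forall x y,
        ~ (cycle_edge (nth i cs []) x y /\ cycle_edge (nth j cs []) x y)).

End CatHerding.

(* The cat fixes a vertex v lying on n + 1 edge-disjoint cycles and alternates
   between v and a neighbour of v on one of the still intact cycles.  Since
   the cycles are edge-disjoint, each deleted edge destroys at most one of
   them, so after n deletions some cycle survives.  From v the cat steps along
   an intact cycle; from the neighbour w it returns to v along the edge wv,
   or around the rest of the cycle if wv was just deleted. *)

From Stdlib Require Import List Lia Permutation Classical.
Import ListNotations.

Lemma ForallOrdPairs_nth (A : Type) (R : A -> A -> Prop) (d : A) (l : list A) :
  (forall i j, i < j < length l -> R (nth i l d) (nth j l d)) ->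
  ForallOrdPairs R l.
Proof.
  induction l as [|a l IH]; intros Hnth; constructor.
  - apply Forall_forall; intros b Hb.
    destruct (In_nth l b d Hb) as [j [Hj <-]].
    apply (Hnth 0 (S j)); simpl; lia.
  - apply IH; intros i j Hij. apply (Hnth (S i) (S j)); simpl; lia.
Qed.

Section CycleLists.
Variable V : Type.

Lemma consec_cons (c : V) l x y : consec l x y -> consec (c :: l) x y.
Proof. intros [l1 [l2 ->]]. exists (c :: l1), l2. reflexivity. Qed.

Lemma consec_pair (a b x y : V) : consec [a; b] x y -> x = a /\ y = b.
Proof.
  intros [[|c [|d l1]] [l2 E]]; simpl in E; inversion E; auto.
  destruct l1; discriminate.
Qed.

Lemma consec_singleton (a x y : V) : ~ consec [a] x y.
Proof. intros [[|b [|c l1]] [l2 E]]; discriminate. Qed.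

Lemma consec_app (l m : list V) x y :
  consec (l ++ m) x y <-> consec l x y \/ consec m x y \/
    ((exists l', l = l' ++ [x]) /\ (exists m', m = y :: m')).
Proof.
  unfold consec; split.
  - intros [l1 [l2 E]]. destruct (app_eq_app _ _ _ _ E) as [l' [[E1 E2]|[E1 E2]]].
    + destruct l' as [|a [|b l'']]; simpl in E2; inversion E2; subst.
      * right; left. exists [], l2. reflexivity.
      * right; right. eauto.
      * left. eauto.
    + right; left. subst. eauto.
  - intros [[l1 [l2 ->]]|[[l1 [l2 ->]]|[[l' ->] [m' ->]]]].
    + exists l1, (l2 ++ m). rewrite <- app_assoc. reflexivity.
    + exists (l ++ l1), l2. rewrite <- app_assoc. reflexivity.
    + exists l', m'. rewrite <- app_assoc. reflexivity.
Qed.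

Lemma starts_with_iff (z y : V) r : (exists m', z :: r = y :: m') <-> y = z.
Proof. split; [intros [m' E]; inversion E; auto | intros ->; eauto]. Qed.

Lemma consec_rotate_closed (a b : V) p q x y :
  consec ((a :: p) ++ (b :: q) ++ [a]) x y <->
  consec ((b :: q) ++ (a :: p) ++ [b]) x y.
Proof.
  assert (Hs : forall (z : V) r w, (exists m', (z :: r) ++ [w] = y :: m') <-> y = z)
    by (intros; apply starts_with_iff).
  rewrite !consec_app, !starts_with_iff, (Hs b q a), (Hs a p b).
  pose proof (consec_singleton a x y); pose proof (consec_singleton b x y).
  tauto.
Qed.

Lemma consec_last (z a b : V) l : consec (l ++ [z]) a b -> In a l.
Proof.
  intros [l1 [l2 E]]. revert l E.
  induction l1 as [|c l1 IH]; intros [|d l] E; simpl in E; inversion E; subst.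
  - left; reflexivity.
  - destruct l1; discriminate.
  - right; eauto.
Qed.

Lemma consec_head (a b : V) l :
  NoDup (a :: l) -> consec (a :: l) a b -> exists l', l = b :: l'.
Proof.
  intros ND [[|c l1] [l2 E]]; simpl in E; inversion E; subst; eauto.
  inversion ND as [|? ? Hnot]. exfalso. apply Hnot, in_or_app. right; left; auto.
Qed.

Lemma cycle_edge_sym (c : list V) a b : cycle_edge c a b -> cycle_edge c b a.
Proof. destruct c; simpl; tauto. Qed.

Definition edge_disjoint (c d : list V) : Prop :=
  forall a b, ~ (cycle_edge c a b /\ cycle_edge d a b).

End CycleLists.

Arguments edge_disjoint {V}.

Section Herding.
Variable V : Type.
Variable adj : V -> V -> Prop.
Hypothesis adj_sym : forall x y, adj x y -> adj y x.

Definition intact (D : list (V * V)) (c : list V) : Prop :=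
  forall a b, cycle_edge c a b -> present adj D a b.

Definition cycle_from (v : V) (c : list V) : Prop :=
  is_cycle adj c /\ exists t, c = v :: t.

Lemma cycle_edge_first (v w : V) t :
  cycle_edge (v :: w :: t) v w /\ cycle_edge (v :: w :: t) w v.
Proof. split; [left | right]; exists [], (t ++ [v]); reflexivity. Qed.

Lemma intact_nil c : is_cycle adj c -> intact [] c.
Proof.
  destruct c as [|z c]; [intros []|]. intros [_ [_ HE]] a b He.
  split; [|simpl; tauto]. destruct He; auto.
Qed.

Lemma present_cons D x y a b :
  present adj D a b -> ~ (x = a /\ y = b) -> ~ (x = b /\ y = a) ->
  present adj ((x, y) :: D) a b.
Proof.
  intros [Ha [Hb1 Hb2]] Hab Hba.
  split; [exact Ha|]. split; intros [E|E]; try tauto; inversion E; subst; tauto.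
Qed.

Lemma intact_cons D c x y :
  intact D c -> ~ cycle_edge c x y -> intact ((x, y) :: D) c.
Proof.
  intros HI Hn a b He. apply present_cons; auto.
  - intros [-> ->]; tauto.
  - intros [-> ->]; apply Hn, cycle_edge_sym; exact He.
Qed.

Lemma cycle_rotate_to (v : V) c :
  is_cycle adj c -> In v c ->
  exists c', cycle_from v c' /\ forall a b, cycle_edge c' a b <-> cycle_edge c a b.
Proof.
  intros Hc Hv. destruct (in_split _ _ Hv) as [[|a l1] [l2 ->]].
  { exists (v :: l2). split; [split; eauto | tauto]. }
  assert (Hrot : forall x y, consec ((v :: l2 ++ a :: l1) ++ [v]) x y <->
                             consec ((a :: l1 ++ v :: l2) ++ [a]) x y).
  { intros x y. simpl; rewrite <- !app_assoc, !app_comm_cons.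
    symmetry; apply consec_rotate_closed. }
  exists (v :: l2 ++ a :: l1). split; [split; [|eauto]|].
  - simpl in Hc |- *. destruct Hc as [ND [Hl HE]]. split; [|split].
    + apply (Permutation_NoDup (l := (a :: l1) ++ (v :: l2))); [|exact ND].
      apply Permutation_app_comm.
    + rewrite length_app in *; simpl in *; lia.
    + intros x y Hxy. apply HE, Hrot, Hxy.
  - intros x y. simpl. rewrite !Hrot. tauto.
Qed.

Lemma rotate_family (v : V) cs :
  ForallOrdPairs edge_disjoint cs ->
  (forall c, In c cs -> is_cycle adj c /\ In v c) ->
  exists cs', length cs' = length cs /\ ForallOrdPairs edge_disjoint cs' /\
    forall c', In c' cs' -> cycle_from v c' /\
      exists c, In c cs /\ forall a b, cycle_edge c' a b <-> cycle_edge c a b.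
Proof.
  induction 1 as [|c cs Hc Hcs IH]; intros Hin.
  { exists []. split; [reflexivity|]. split; [constructor | intros ? []]. }
  destruct IH as [cs' [Hl [Hd Hg]]]; [intros; apply Hin; right; auto|].
  destruct (Hin c (or_introl eq_refl)) as [Hcyc Hv].
  destruct (cycle_rotate_to v c Hcyc Hv) as [c0 [Hc0 Hiff]].
  exists (c0 :: cs'). split; [simpl; lia|]. split.
  - constructor; [|exact Hd]. apply Forall_forall; intros d' Hd' a b [H1 H2].
    destruct (Hg d' Hd') as [_ [d [Hdin Hdiff]]].
    apply (proj1 (Forall_forall _ _) Hc d Hdin a b).
    split; [apply Hiff, H1 | apply Hdiff, H2].
  - intros z [<-|Hz]; [split; eauto; exists c; split; [left|]; auto|].
    destruct (Hg z Hz) as [A [d [B C]]]. split; [exact A|]. exists d; split; [right|]; auto.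
Qed.

Lemma delete_edge_spares_all_but_one D cs x y :
  ForallOrdPairs edge_disjoint cs -> Forall (intact D) cs ->
  exists cs', incl cs' cs /\ length cs <= S (length cs') /\
    ForallOrdPairs edge_disjoint cs' /\ Forall (intact ((x, y) :: D)) cs'.
Proof.
  induction 1 as [|c cs Hc Hcs IH]; intros HI.
  { exists []. split; [intros ? []|]. split; [simpl; lia|]. split; constructor. }
  inversion HI as [|? ? HIc HIcs]; subst.
  destruct (classic (cycle_edge c x y)) as [Hce|Hce].
  - exists cs. split; [intros z Hz; right; exact Hz|]. split; [simpl; lia|].
    split; [exact Hcs|]. apply Forall_forall; intros d Hd. apply intact_cons.
    + exact (proj1 (Forall_forall _ _) HIcs d Hd).
    + intros Hdxy. apply (proj1 (Forall_forall _ _) Hc d Hd x y); auto.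
  - destruct (IH HIcs) as [cs' [Hinc [Hlen [Hd' HI']]]].
    exists (c :: cs'). split; [apply incl_cons; [left | apply incl_tl]; auto|].
    split; [simpl; lia|]. split.
    + constructor; [|exact Hd']. apply Forall_forall; intros d Hd.
      exact (proj1 (Forall_forall _ _) Hc d (Hinc d Hd)).
    + constructor; [apply intact_cons|]; auto.
Qed.

Lemma cat_move_edge (E : V -> V -> Prop) v w : v <> w -> E v w -> cat_move E v w.
Proof.
  intros Hvw HE. exists []. split; [|split; [simpl; lia|]].
  - constructor; [intros [->|[]]; auto | constructor; [intros []|constructor]].
  - intros a b Hab. destruct (consec_pair _ _ _ _ _ Hab) as [-> ->]. exact HE.
Qed.

Lemma cat_move_along D (v u : V) t :
  cycle_from v (v :: u :: t) -> intact D (v :: u :: t) ->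
  cat_move (present adj D) v u.
Proof.
  intros [[ND _] _] HI. apply cat_move_edge.
  - intros ->. inversion ND as [|? ? Hnot]. apply Hnot; left; auto.
  - apply HI, cycle_edge_first.
Qed.

(* [1 <= length t] is essential: on a 2-cycle the way around is wv itself. *)
Lemma consec_around (v w : V) t a b :
  NoDup (v :: w :: t) -> 1 <= length t -> consec (w :: t ++ [v]) a b ->
  a <> v /\ ~ (a = w /\ b = v).
Proof.
  intros ND Ht Hc. assert (Hv : ~ In v (w :: t)) by (inversion ND; auto).
  split; [intros ->; apply Hv; eapply consec_last; exact Hc|].
  intros [-> ->].
  assert (ND' : NoDup (w :: t ++ [v]))
    by (apply (Permutation_NoDup (Permutation_cons_append (w :: t) v)), ND).
  destruct (consec_head V w v (t ++ [v]) ND' Hc) as [l' E].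
  destruct t as [|z t]; simpl in Ht; [lia|]. inversion E; subst.
  apply Hv; right; left; auto.
Qed.

Lemma cat_move_back D x y (v w : V) t :
  cycle_from v (v :: w :: t) -> intact D (v :: w :: t) ->
  cat_move (present adj ((x, y) :: D)) w v.
Proof.
  intros [[ND [Hlen _]] _] HI.
  destruct (classic ((x = w /\ y = v) \/ (x = v /\ y = w))) as [Hxy|Hxy].
  - exists t. split; [|split].
    + apply (Permutation_NoDup (Permutation_cons_append (w :: t) v)), ND.
    + simpl; rewrite length_app; simpl; lia.
    + intros a b Hab.
      destruct (consec_around v w t a b ND ltac:(simpl in Hlen; lia) Hab) as [Hav Haw].
      apply present_cons; [apply HI; left; apply consec_cons, Hab | |];
        destruct Hxy as [[-> ->]|[-> ->]]; intros [E1 E2]; subst; tauto.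
  - apply cat_move_edge.
    + intros ->. inversion ND as [|? ? Hnot]. apply Hnot; left; auto.
    + apply present_cons; [apply HI, cycle_edge_first | |];
        intros [E1 E2]; subst; tauto.
Qed.

Definition herding_state (v : V) (n : nat) (D : list (V * V)) (w : V) : Prop :=
  exists cs, n < length cs /\ ForallOrdPairs edge_disjoint cs /\
    (forall c, In c cs -> cycle_from v c /\ intact D c) /\
    (w = v \/ exists t, In (v :: w :: t) cs).

Lemma herding_state_init (v : V) n cs :
  n < length cs -> ForallOrdPairs edge_disjoint cs ->
  (forall c, In c cs -> is_cycle adj c /\ In v c) ->
  herding_state v n [] v.
Proof.
  intros Hn Hd Hin. destruct (rotate_family v cs Hd Hin) as [cs' [Hl [Hd' Hg]]].
  exists cs'. split; [lia|]. split; [exact Hd'|]. split; [|left; reflexivity].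
  intros c Hc. destruct (Hg c Hc) as [Hfrom _].
  split; [exact Hfrom | apply intact_nil, Hfrom].
Qed.

Lemma herding_state_survives (v : V) n :
  forall D w, herding_state v n D w -> CatSurvives adj n D w.
Proof.
  induction n as [|n IHn]; [constructor|].
  intros D w [cs [Hlen [Hd [Hcs Hw]]]] x y _.
  destruct (delete_edge_spares_all_but_one D cs x y Hd)
    as [cs' [Hinc [Hlen' [Hd' HI']]]].
  { apply Forall_forall; intros c Hc; apply Hcs, Hc. }
  assert (Hcs' : forall c, In c cs' -> cycle_from v c /\ intact ((x, y) :: D) c).
  { intros c Hc.
    split; [apply Hcs, Hinc, Hc | exact (proj1 (Forall_forall _ _) HI' c Hc)]. }
  assert (Hstate : forall w', (w' = v \/ exists t, In (v :: w' :: t) cs') ->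
                              CatSurvives adj n ((x, y) :: D) w').
  { intros w' Hw'. apply IHn. exists cs'.
    split; [lia|]. split; [exact Hd'|]. split; [exact Hcs' | exact Hw']. }
  destruct Hw as [->|[t Hin]].
  - destruct cs' as [|c cs'']; [simpl in *; lia|].
    destruct (Hcs' c (or_introl eq_refl)) as [Hfrom HI].
    destruct Hfrom as [Hcyc [[|u t'] ->]]; [destruct Hcyc as [_ [Hl _]]; simpl in Hl; lia|].
    exists u. split.
    + apply (cat_move_along _ v u t'); [split; eauto | exact HI].
    + apply Hstate. right. exists t'. left; reflexivity.
  - exists v. split; [apply (cat_move_back D x y v w t); apply Hcs, Hin|].
    apply Hstate. left; reflexivity.
Qed.

End Herding.

Theorem mainTheorem17 (V : Type) (adj : V -> V -> Prop)
  (adj_sym : forall x y, adj x y -> adj y x)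
  (adj_irrefl : forall x, ~ adj x x)
  (H : forall k : nat, exists v : V, on_k_edge_disjoint_cycles adj v k) :
  omega_evadible adj.
Proof.
  intros k. destruct (H (S (k - 1))) as [v [cs [Hlen [Hcyc Hdisj]]]].
  exists v. apply (herding_state_survives V adj v).
  apply (herding_state_init V adj adj_sym v (k - 1) cs); [lia| |exact Hcyc].
  apply (ForallOrdPairs_nth _ edge_disjoint []).
  rewrite Hlen. exact Hdisj.
Qed.
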